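(* For every $\lambda>\lambda^*$, $e(\lambda)>-\frac{1}{\gamma b^*}$, where $b^*=\max_{1\le j\le n}b_j$.
   Context: Standing setup. Let $\gamma>0$; let $a_1,\dots,a_p>0$ with weights $\omega_i>0$, $\sum_i\omega_i=1$, and $b_1,\dots,b_n>0$ with weights $\pi_j>0$, $\sum_j\pi_j=1$. Let $\mu$ be the limiting spectral distribution of $\mathbf{N}\mathbf{N}^T$ where $\mathbf{N}=\mathbf{A}^{1/2}\mathbf{G}\mathbf{B}^{1/2}$ is $k\times l$, $\mathbf{G}$ has iid mean-zero entries of variance $1/l$, $k/l\to\gamma$, and the spectral distributions of $\mathbf{A},\mathbf{B}$ converge to $\nu=\sum_i\omega_i\delta_{a_i}$ and $\underline{\nu}=\sum_j\pi_j\delta_{b_j}$. $\mu$ is a compactly supported probability measure on $[0,\infty)$; $\lambda^*>0$ is the right endpoint of its support, and $s(\lambda)=\int\frac{d\mu(t)}{t-\lambda}$ for $\lambda>\lambda^*$. Define $G(e)=\sum_{j=1}^n\frac{b_j\pi_j}{1+\gamma b_j e}$. It is known (master equations) that there is a continuous (indeed smooth) real function $e(\lambda)$ on $(\lambda^*,\infty)$, never equal to a pole $-1/(\gamma b_j)$ of $G$ and with $a_iG(e(\lambda))\ne\lambda$, satisfying $s(\lambda)=\sum_{i=1}^p\frac{\omega_i}{a_iG(e(\lambda))-\lambda}$ and $e(\lambda)=\sum_{i=1}^p\frac{a_i\omega_i}{a_iG(e(\lambda))-\lambda}$. *)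

From Stdlib Require Import Reals.
Open Scope R_scope.

Fixpoint rsum (n : nat) (f : nat -> R) : R :=
  match n with O => 0 | S k => rsum k f + f k end.

(* rmax n f = max_{0<=j<n} f j  (with value 0 for n = 0; only used for n >= 1, f > 0) *)
Fixpoint rmax (n : nat) (f : nat -> R) : R :=
  match n with O => 0 | S k => Rmax (rmax k f) (f k) end.

Definition Gfun (gamma : R) (n : nat) (b pi : nat -> R) (e : R) : R :=
  rsum n (fun j => b j * pi j / (1 + gamma * b j * e)).

Definition cont_on (lstar : R) (f : R -> R) : Prop :=
  forall t, 0 <= t <= lstar -> continuity_pt f t.

(* A probability measure mu supported in [0, lstar], represented (Riesz) by its
   integration functional I f = \int f dmu on functions continuous on [0, lstar]:
   linear, positive w.r.t. values on [0, lstar], and I 1 = 1. *)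
Definition prob_functional (lstar : R) (I : (R -> R) -> R) : Prop :=
  (forall f g, cont_on lstar f -> cont_on lstar g ->
      I (fun t => f t + g t) = I f + I g) /\
  (forall c f, cont_on lstar f -> I (fun t => c * f t) = c * I f) /\
  (forall f, cont_on lstar f -> (forall t, 0 <= t <= lstar -> 0 <= f t) -> 0 <= I f) /\
  I (fun _ => 1) = 1.

(* lstar belongs to the support of mu: every neighbourhood of lstar has positive mass. *)
Definition in_support (lstar : R) (I : (R -> R) -> R) : Prop :=
  forall eps, eps > 0 -> exists f : R -> R,
    continuity f /\ (forall t, 0 <= f t) /\
    (forall t, Rabs (t - lstar) >= eps -> f t = 0) /\ I f > 0.

Definition stieltjes (I : (R -> R) -> R) (l : R) : R := I (fun t => 1 / (t - l)).

From Stdlib Require Import Reals Lra Lia Ranalysis5.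
Open Scope R_scope.

(* Put bmax = b_jm (the maximum of the b_j, attained at jm) and
   T = -1/(gamma bmax) < 0.  Since T is a pole of G, the continuous function e
   never takes the value T on (lstar, oo); by the intermediate value theorem
   it therefore suffices to find one L > lambda with e(L) > T.

   For large L this follows from the master equations alone.  They give the
   identity G(e) e - L s(L) = 1, while positivity of mu gives
   s(L) >= -1/(L - lstar).  Hence G(e) e >= -lstar; if e(L) <= T < 0 this
   bounds G(e(L)) <= lstar/(-T), so every denominator a_i G(e) - L is at most
   -L/2, and the master equation for e yields e(L) >= -2 (sum_i a_i w_i)/L,
   which is > T for L large: a contradiction. *)

Lemma Rdiv_nonneg (x y : R) : 0 <= x -> 0 < y -> 0 <= x / y.
Proof. intros Hx Hy. apply Rmult_le_pos; [exact Hx | left; apply Rinv_0_lt_compat, Hy]. Qed.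

Lemma rsum_ext (n : nat) (f g : nat -> R) :
  (forall i, (i < n)%nat -> f i = g i) -> rsum n f = rsum n g.
Proof.
  induction n as [|n IH]; simpl; intros H; [reflexivity|].
  rewrite IH by (intros; apply H; lia). rewrite H by lia. reflexivity.
Qed.

Lemma rsum_plus (n : nat) (f g : nat -> R) :
  rsum n (fun i => f i + g i) = rsum n f + rsum n g.
Proof. induction n as [|n IH]; simpl; [lra|]. rewrite IH. lra. Qed.

Lemma rsum_scal (n : nat) (c : R) (f : nat -> R) :
  rsum n (fun i => c * f i) = c * rsum n f.
Proof. induction n as [|n IH]; simpl; [lra|]. rewrite IH. lra. Qed.

Lemma rsum_le (n : nat) (f g : nat -> R) :
  (forall i, (i < n)%nat -> f i <= g i) -> rsum n f <= rsum n g.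
Proof.
  induction n as [|n IH]; simpl; intros H; [lra|].
  assert (rsum n f <= rsum n g) by (apply IH; intros; apply H; lia).
  assert (f n <= g n) by (apply H; lia). lra.
Qed.

Lemma rsum_nonneg (n : nat) (f : nat -> R) :
  (forall i, (i < n)%nat -> 0 <= f i) -> 0 <= rsum n f.
Proof.
  induction n as [|n IH]; simpl; intros H; [lra|].
  assert (0 <= rsum n f) by (apply IH; intros; apply H; lia).
  assert (0 <= f n) by (apply H; lia). lra.
Qed.

Lemma rsum_ge_term (n : nat) (f : nat -> R) (i : nat) :
  (forall k, (k < n)%nat -> 0 <= f k) -> (i < n)%nat -> f i <= rsum n f.
Proof.
  induction n as [|n IH]; intros H Hi; [lia|]. simpl.
  assert (0 <= rsum n f) by (apply rsum_nonneg; intros; apply H; lia).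
  assert (0 <= f n) by (apply H; lia).
  destruct (Nat.eq_dec i n) as [->|Hne]; [lra|].
  assert (f i <= rsum n f) by (apply IH; [intros; apply H|]; lia). lra.
Qed.

(* The maximum [rmax] of nonnegative values is attained at some index;
   needed to identify -1/(gamma bmax) with a pole of G. *)
Lemma rmax_attained (n : nat) (b : nat -> R) :
  (1 <= n)%nat -> (forall j, (j < n)%nat -> 0 <= b j) ->
  exists j, (j < n)%nat /\ rmax n b = b j.
Proof.
  induction n as [|n IH]; intros Hn H; [lia|]. simpl.
  destruct n as [|n].
  - exists 0%nat. split; [lia|]. simpl. apply Rmax_right, H. lia.
  - destruct IH as [j [Hj Ej]]; [lia | intros; apply H; lia |].
    unfold Rmax. destruct (Rle_dec (rmax (S n) b) (b (S n))).
    + exists (S n). split; [lia | reflexivity].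
    + exists j. split; [lia | exact Ej].
Qed.

(* Since mu lives on [0, lstar], the Stieltjes transform beyond lstar is
   bounded below by that of the point mass at lstar. *)
Lemma stieltjes_lower_bound (lstar l : R) (I : (R -> R) -> R) :
  prob_functional lstar I -> lstar < l -> -1 / (l - lstar) <= stieltjes I l.
Proof.
  intros [Hadd [Hscal [Hpos Hone]]] Hl.
  set (c := 1 / (l - lstar)).
  assert (Hres : cont_on lstar (fun t => 1 / (t - l))) by (intros t Ht; reg; lra).
  assert (Hconst : forall k, cont_on lstar (fun _ => k)) by (intros k t Ht; reg).
  assert (Hshift : forall t, 0 <= t <= lstar -> 0 <= 1 / (t - l) + c * 1).
  { intros t Ht. unfold c, Rdiv.
    assert (Hinv : / (- (t - l)) <= / (l - lstar)) by (apply Rinv_le_contravar; lra).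
    rewrite Rinv_opp in Hinv. lra. }
  assert (Hsum : I (fun t => 1 / (t - l) + c * 1) = stieltjes I l + c).
  { rewrite (Hadd _ (fun _ => c * 1)), (Hscal c (fun _ => 1)), Hone
      by (apply Hres || apply Hconst). unfold stieltjes. lra. }
  assert (0 <= I (fun t => 1 / (t - l) + c * 1))
    by (apply Hpos; [intros t Ht; reg; lra | exact Hshift]).
  unfold c in *. unfold Rdiv in *. lra.
Qed.

(* Eliminating the two master equations: G(e) e - l s = 1. *)
Lemma master_identity (p : nat) (a omega : nat -> R) (g l : R) :
  rsum p omega = 1 ->
  (forall i, (i < p)%nat -> a i * g <> l) ->
  g * rsum p (fun i => a i * omega i / (a i * g - l))
    - l * rsum p (fun i => omega i / (a i * g - l)) = 1.
Proof.
  intros Homega Hden.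
  transitivity (rsum p (fun i => g * (a i * omega i / (a i * g - l))
                                 + (- l) * (omega i / (a i * g - l)))).
  - rewrite rsum_plus, !rsum_scal. ring.
  - rewrite <- Homega. apply rsum_ext. intros i Hi.
    assert (a i * g - l <> 0) by (specialize (Hden i Hi); lra).
    field. assumption.
Qed.

Lemma weighted_reciprocal_lower_bound (p : nat) (w d : nat -> R) (l : R) :
  0 < l -> (forall i, (i < p)%nat -> 0 <= w i /\ d i <= - l / 2) ->
  -2 / l * rsum p w <= rsum p (fun i => w i / d i).
Proof.
  intros Hl H. rewrite <- rsum_scal. apply rsum_le. intros i Hi.
  destruct (H i Hi) as [Hw Hd].
  assert (Hinv : / (- d i) <= / (l / 2)) by (apply Rinv_le_contravar; lra).
  rewrite Rinv_opp in Hinv.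
  replace (-2 / l * w i) with (w i * - / (l / 2)) by (field; lra).
  unfold Rdiv. apply Rmult_le_compat_l; lra.
Qed.

Lemma master_solution_above_level (p : nat) (a omega : nat -> R)
    (lstar T g x s L : R) :
  0 <= lstar -> T < 0 ->
  (forall i, (i < p)%nat -> a i > 0 /\ omega i > 0) -> rsum p omega = 1 ->
  (forall i, (i < p)%nat -> a i * g <> L) ->
  s = rsum p (fun i => omega i / (a i * g - L)) ->
  x = rsum p (fun i => a i * omega i / (a i * g - L)) ->
  -1 / (L - lstar) <= s ->
  lstar + 1 <= L ->
  2 * rsum p a * (lstar / - T) <= L ->
  2 * rsum p (fun i => a i * omega i) / - T < L ->
  T < x.
Proof.
  intros Hlstar HT Hpos Homega Hden Hs Hx Hsl HL1 HL2 HL3.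
  destruct (Rlt_or_le T x) as [|Hle]; [assumption|]. exfalso.
  assert (Hid : g * x - L * s = 1) by (subst; apply master_identity; assumption).
  (* G(e) e >= -lstar, from the identity and the Stieltjes bound. *)
  assert (Hgx : - lstar <= g * x).
  { assert (HLs : L * (-1 / (L - lstar)) <= L * s) by (apply Rmult_le_compat_l; lra).
    assert (Hfrac : L * (-1 / (L - lstar)) = -1 - lstar / (L - lstar)) by (field; lra).
    assert (lstar / (L - lstar) <= lstar).
    { assert (Hq : lstar / (L - lstar) * (L - lstar) = lstar) by (field; lra).
      assert (0 <= lstar / (L - lstar)) by (apply Rdiv_nonneg; lra).
      nra. }
    lra. }
  (* On the branch x <= T < 0 this bounds G(e). *)
  assert (Hg : g <= lstar / - T).
  { apply (Rmult_le_reg_r (- T)); [lra|].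
    unfold Rdiv. rewrite Rmult_assoc, Rinv_l, Rmult_1_r by lra.
    destruct (Rle_or_lt g 0); nra. }
  (* Hence every denominator a_i g - L is at most -L/2. *)
  assert (Hbound : -2 / L * rsum p (fun i => a i * omega i) <= x).
  { rewrite Hx. apply (weighted_reciprocal_lower_bound p
      (fun i => a i * omega i) (fun i => a i * g - L)); [lra|].
    intros i Hi. destruct (Hpos i Hi) as [Ha Ho]. split; [nra|].
    assert (a i <= rsum p a)
      by (apply rsum_ge_term; [intros k Hk; destruct (Hpos k Hk); lra | exact Hi]).
    assert (0 <= lstar / - T) by (apply Rdiv_nonneg; lra).
    assert (a i * g <= rsum p a * (lstar / - T)).
    { destruct (Rle_or_lt g 0); [nra | apply Rmult_le_compat; lra]. }
    lra. }
  set (Aw := rsum p (fun i => a i * omega i)) in *.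
  assert (HA : T < -2 / L * Aw).
  { assert (Hq1 : 2 * Aw / - T * - T = 2 * Aw) by (field; lra).
    assert (Hq2 : -2 / L * Aw * L = - (2 * Aw)) by (field; lra).
    nra. }
  lra.
Qed.

Lemma continuous_avoiding_level (f : R -> R) (T l L : R) :
  l < L -> (forall x, l <= x <= L -> continuity_pt f x) ->
  (forall x, l <= x <= L -> f x <> T) -> T < f L -> T < f l.
Proof.
  intros HlL Hcont Havoid HfL.
  destruct (Rlt_or_le T (f l)) as [|Hle]; [assumption|]. exfalso.
  assert (Hlt : f l < T) by (destruct Hle; [assumption | exfalso; apply (Havoid l); lra]).
  destruct (IVT_interv (fun y => f y - T) l L) as [z [Hz Ez]];
    [intros y Hy; specialize (Hcont y Hy); reg | lra | lra | lra |].
  apply (Havoid z Hz). lra.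
Qed.

Theorem corollary3p4 (gamma : R) (p n : nat) (a omega b pi : nat -> R)
    (lstar : R) (I : (R -> R) -> R) (e : R -> R) :
  gamma > 0 ->
  (forall i, (i < p)%nat -> a i > 0 /\ omega i > 0) -> rsum p omega = 1 ->
  (forall j, (j < n)%nat -> b j > 0 /\ pi j > 0) -> rsum n pi = 1 ->
  lstar > 0 -> prob_functional lstar I -> in_support lstar I ->
  (forall l, l > lstar ->
     continuity_pt e l /\
     (forall j, (j < n)%nat -> e l <> - 1 / (gamma * b j)) /\
     (forall i, (i < p)%nat -> a i * Gfun gamma n b pi (e l) <> l) /\
     stieltjes I l = rsum p (fun i => omega i / (a i * Gfun gamma n b pi (e l) - l)) /\
     e l = rsum p (fun i => a i * omega i / (a i * Gfun gamma n b pi (e l) - l))) ->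
  forall l, l > lstar -> e l > - 1 / (gamma * rmax n b).
Proof.
  intros Hgamma Ha Homega Hb Hpi Hlstar HI _ Hmaster l Hl.
  assert (Hn : (1 <= n)%nat) by (destruct n; [simpl in Hpi; lra | lia]).
  destruct (rmax_attained n b Hn) as [jm [Hjm Emax]];
    [intros j Hj; destruct (Hb j Hj); lra |].
  set (T := - 1 / (gamma * rmax n b)).
  assert (HT : T < 0).
  { unfold T, Rdiv. rewrite Emax.
    destruct (Hb jm Hjm) as [Hbjm _].
    assert (0 < / (gamma * b jm)) by (apply Rinv_0_lt_compat; nra).
    lra. }
  (* T is a pole of G, so e never equals T. *)
  assert (Havoid : forall x, l <= x -> e x <> T).
  { intros x Hx. unfold T. rewrite Emax. apply (Hmaster x ltac:(lra)), Hjm. }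
  set (Asum := rsum p a). set (Aw := rsum p (fun i => a i * omega i)).
  assert (0 <= Asum) by (apply rsum_nonneg; intros i Hi; destruct (Ha i Hi); lra).
  assert (0 <= Aw) by (apply rsum_nonneg; intros i Hi; destruct (Ha i Hi); nra).
  assert (0 <= 2 * Asum * (lstar / - T))
    by (apply Rmult_le_pos; [lra | apply Rdiv_nonneg; lra]).
  assert (0 <= 2 * Aw / - T) by (apply Rdiv_nonneg; lra).
  (* A point L beyond l and beyond all thresholds of the large-L bound. *)
  set (L := l + lstar + 1 + 2 * Asum * (lstar / - T) + 2 * Aw / - T + 1).
  destruct (Hmaster L ltac:(unfold L; lra)) as [_ [_ [Hden [Hs He]]]].
  apply Rlt_gt, (continuous_avoiding_level e T l L);
    [unfold L; lra | intros y Hy; apply Hmaster; lra | intros y Hy; apply Havoid; lra |].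
  apply (master_solution_above_level p a omega lstar T
           (Gfun gamma n b pi (e L)) (e L) (stieltjes I L) L);
    try assumption; try (unfold L, Asum, Aw in *; lra).
  apply stieltjes_lower_bound; [assumption | unfold L; lra].
Qed.
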